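(* Let $X$ be a real random variable and $U$ a continuously distributed random variable with $U\sim\mathrm{Unif}[0,1]$. Let $\mathcal{T}=[a,b]\subseteq[0,1]$. If $U$ is $\mathcal{T}$-independent of $X$, then $F_{X\mid U}(x\mid u)=F_X(x)$ for all $x\in\mathbb{R}$ and almost all $u\in\mathcal{T}$.
   Context: $U$ is $\mathcal{T}$-independent of $X$ if $F_{U\mid X}(\tau\mid x)=F_U(\tau)$ for all $x\in\operatorname{supp}(X)$ and all $\tau\in\mathcal{T}$. Here $F_{X\mid U}(\cdot\mid u)$ is the conditional cdf of $X$ given $U=u$ and $F_X$ is the marginal cdf of $X$. *)

From HB Require Import structures.
From mathcomp Require Import all_boot all_order all_algebra.
From mathcomp Require Import all_classical all_reals all_analysis.
Set Implicit Arguments. Unset Strict Implicit. Unset Printing Implicit Defensive.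
Import Order.TTheory GRing.Theory Num.Theory.
Import numFieldNormedType.Exports.
Local Open Scope classical_set_scope.
Local Open Scope ring_scope.

(* [is_cond_cdf P Y Z G] : G y z is (a version of) the conditional cdf
   F_{Y|Z}(y|z) of Y given Z = z, i.e. for every y, z |-> G y z is measurable and
   for every Borel set B,
     P(Y <= y, Z \in B) = \int_B G y z  dP_Z(z). *)
Definition is_cond_cdf d (T : measurableType d) (R : realType)
  (P : probability T R) (Y Z : {RV P >-> R}) (G : R -> R -> R) : Prop :=
  forall y : R, measurable_fun setT (G y) /\
    forall B : set R, measurable B ->
      P (Y @^-1` `]-oo, y] `&` Z @^-1` B) =
      (\int[distribution P Z]_(z in B) (G y z)%:E)%E.

Definition rv_support d (T : measurableType d) (R : realType)
  (P : probability T R) (X : {RV P >-> R}) : set R :=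
  [set x | forall e : R, 0 < e -> (0 < distribution P X (ball x e))%E].

Definition is_unif01 d (T : measurableType d) (R : realType)
  (P : probability T R) (U : {RV P >-> R}) : Prop :=
  forall t : R, cdf U t = (Num.min (Num.max t 0) 1)%:E.

Definition T_independent d (T : measurableType d) (R : realType)
  (P : probability T R) (U X : {RV P >-> R}) (H : R -> R -> R) (a b : R) : Prop :=
  forall x tau, x \in rv_support X -> tau \in `[a, b] ->
    (H tau x)%:E = cdf U tau.

From HB Require Import structures.
From mathcomp Require Import all_boot all_order all_algebra.
From mathcomp Require Import all_classical all_reals all_analysis.
From mathcomp Require Import lra.
Set Implicit Arguments. Unset Strict Implicit. Unset Printing Implicit Defensive.
Import Order.TTheory GRing.Theory Num.Theory.
Import numFieldNormedType.Exports.
Local Open Scope classical_set_scope.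
Local Open Scope ring_scope.

(* For t in [a, b], T-independence gives F_{U|X}(t | .) = F_U(t) = t on the
   support of X, whose complement is null, hence P(U <= t, X <= x) = t F_X(x).
   Measures agreeing on the intervals ]s, t] of ]a, b] agree on all Borel
   subsets of ]a, b]; there, E |-> P(U in E, X <= x) is thus F_X(x) times the
   law of U, which is Lebesgue measure. This measure is also the integral of
   F_{X|U}(x | .) against the law of U, so F_{X|U}(x | .) = F_X(x) almost
   everywhere on ]a, b]; the endpoint a is Lebesgue-null. *)

Section itvoc.
Variable R : realType.
Implicit Types (s t a b : R) (m : {measure set R -> \bar R}).

Lemma setI_itvoc s t a b :
  `]s, t]%classic `&` `]a, b]%classic =
    `]Num.max s a, Num.min t b]%classic :> set R.
Proof.
apply/seteqP; split => z /=; rewrite !in_itv /=.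
  by move=> [/andP[sz zt] /andP[az zb]]; rewrite gt_max le_min sz zt az zb.
by rewrite gt_max le_min => /andP[/andP[-> ->] /andP[-> ->]].
Qed.

Lemma measure_itvocB m s t p q : s <= t ->
  m `]-oo, t]%classic = p%:E -> m `]-oo, s]%classic = q%:E ->
  m `]s, t]%classic = (p - q)%:E.
Proof.
move=> st mt ms.
have : m `]-oo, t]%classic = (m `]-oo, s]%classic + m `]s, t]%classic)%E.
  rewrite (@itv_bndbnd_setU _ _ _ (BRight s)) ?bnd_simp // measureU //.
  apply/seteqP; split => // z /=; rewrite !in_itv /= => -[zs /andP[sz _]].
  by have := le_lt_trans zs sz; rewrite ltxx.
rewrite mt ms; case: (m `]s, t]%classic) => [r||] //= [->].
by rewrite addrC addrK.
Qed.

Lemma measure_setI_itvoc_unique m1 m2 a b : (m1 `]a, b]%classic < +oo)%E ->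
  (forall s t, a <= s -> s < t -> t <= b ->
    m1 `]s, t]%classic = m2 `]s, t]%classic) ->
  forall E, measurable E ->
    m1 (E `&` `]a, b]%classic) = m2 (E `&` `]a, b]%classic).
Proof.
move=> m1ab m12 E mE; have mab : measurable (`]a, b]%classic : set R) by [].
apply: (@measure_unique _ _ _ (@ocitv R) (fun k => `]- k%:R, k%:R]%classic)
  _ _ _ _ (mrestr m1 mab) (mrestr m2 mab)) => //.
- exact: ocitvI.
- by move=> k; exact: is_ocitv.
- apply/seteqP; split => // z _; exists (Num.trunc `|z|).+1 => //=.
  have z_lt := truncnS_gt `|z|; rewrite in_itv /= ltrNl.
  apply/andP; split; last exact/ltW/(le_lt_trans (ler_norm z)).
  by apply: le_lt_trans z_lt; rewrite -normrN ler_norm.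
- move=> A /ocitvP [->|[[s t] /= _ ->]]; first by rewrite !measure0.
  rewrite /mrestr setI_itvoc.
  have [lt|ge] := ltP (Num.max s a) (Num.min t b).
    by apply: m12 => //; rewrite ?le_max ?ge_min lexx orbT.
  rewrite set_itv_ge ?measure0 //.
  by rewrite bnd_simp -leNgt.
- move=> k; apply: le_lt_trans m1ab.
  by apply: le_measure; rewrite ?inE //; exact: measurableI.
Qed.

End itvoc.

Section support.
Variable R : realType.

Definition grid_ball (p : nat * int) : set R :=
  ball (p.2%:~R / p.1.+1%:R : R) p.1.+1%:R^-1.

Lemma grid_ball_sub (z e : R) : 0 < e ->
  exists p, grid_ball p z /\ grid_ball p `<=` ball z e.
Proof.
move=> e0; pose n := Num.trunc (2 / e); pose m := Num.floor (z * n.+1%:R).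
exists (n, m); rewrite /grid_ball /=.
set w := n.+1%:R^-1; have w0 : 0 < w by rewrite invr_gt0.
have Nw : n.+1%:R * w = 1 by rewrite mulfV.
have we : 2 * w < e.
  have : 2 / e < n.+1%:R := truncnS_gt _.
  by rewrite ltr_pdivrMr //; nra.
have mz : m%:~R <= z * n.+1%:R := floor_le _.
have zm : z * n.+1%:R < m%:~R + 1.
  by rewrite -[1]/(1%:~R) -intrD; exact: floorD1_gt.
have mwz : m%:~R * w <= z.
  by move: mz; rewrite -(ler_pM2r w0) -mulrA Nw mulr1.
have zmw : z < m%:~R * w + w.
  by move: zm; rewrite -(ltr_pM2r w0) -mulrA Nw mulr1 mulrDl mul1r.
rewrite !ball_itv /= in_itv /=; split; first by apply/andP; split; lra.
by move=> y /=; rewrite !in_itv /= => /andP[? ?]; apply/andP; split; lra.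
Qed.

Lemma measurable_grid_ball p : measurable (grid_ball p).
Proof. by rewrite /grid_ball ball_itv; exact: measurable_itv. Qed.

(* Every point outside the support lies in a null grid ball, and there are
   countably many grid balls. *)
Lemma negligible_compl_support (mu : {measure set R -> \bar R}) :
  mu.-negligible (~` [set x | forall e, 0 < e -> (0 < mu (ball x e))%E]).
Proof.
pose F k := if unpickle k is Some p then
  if mu (grid_ball p) == 0%E then grid_ball p else set0 else set0.
apply: (negligibleS _ (negligible_bigcup (F := F) _)).
- move=> z /= /existsNP [e /not_implyP [e0 /negP]]; rewrite -leNgt => mz.
  have [p [zp pe]] := grid_ball_sub z e0.
  exists (pickle p) => //; rewrite /F pickleK ifT //.
  rewrite eq_le measure_ge0 andbT (le_trans _ mz) //.
  apply: le_measure pe; apply/mem_set; first exact: measurable_grid_ball.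
  by rewrite ball_itv; exact: measurable_itv.
- move=> k; rewrite /F; case: (unpickle k) => [p|]; last exact: negligible_set0.
  case: ifPn => [/eqP p0|_]; last exact: negligible_set0.
  by apply/negligibleP => //; exact: measurable_grid_ball.
Qed.

End support.

(* [lebesgue_measure] is a measure on [measurableTypeR R]; this copy is a
   measure on the canonical measurable structure of [R], the one used by
   real random variables. *)
Section lebesgueR.
Variable R : realType.

Definition lebesgueR : set R -> \bar R := @lebesgue_measure R.

Let lebesgueR0 : lebesgueR set0 = 0%E. Proof. exact: measure0. Qed.
Let lebesgueR_ge0 A : (0 <= lebesgueR A)%E. Proof. exact: measure_ge0. Qed.
Let lebesgueR_semi_sigma_additive : semi_sigma_additive lebesgueR.
Proof. exact: (@measure_semi_sigma_additive _ _ _ (@lebesgue_measure R)). Qed.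
HB.instance Definition _ := isMeasure.Build _ _ _ lebesgueR
  lebesgueR0 lebesgueR_ge0 lebesgueR_semi_sigma_additive.
End lebesgueR.

Lemma ae_lebesgue_itvcc (R : realType) (mu : {measure set R -> \bar R})
    (a b : R) (f g : R -> \bar R) :
  (forall E, measurable E ->
    mu (E `&` `]a, b]%classic) = lebesgueR (E `&` `]a, b]%classic)) ->
  ae_eq mu `]a, b]%classic f g ->
  {ae @lebesgue_measure R, forall u, u \in `[a, b] -> f u = g u}.
Proof.
move=> mu_leb [N [mN muN0 fgN]].
have mNab : measurable (N `&` `]a, b]%classic) by exact: measurableI.
suff : (@lebesgue_measure R).-negligible
  (~` [set u | u \in `[a, b] -> f u = g u]) by [].
apply: (@negligibleS _ _ _ (@lebesgue_measure R)
  ((N `&` `]a, b]%classic) `|` [set a])); last apply: negligibleU.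
- move=> u /= /not_implyP[]; rewrite in_itv /= => /andP[au ub] fgu.
  have [->|ua] := eqVneq u a; [by right | left].
  have uab : `]a, b]%classic u.
    by rewrite /= in_itv /= lt_neqAle eq_sym ua au ub.
  by split => //; apply: fgN => /(_ uab).
- apply/negligibleP => //.
  change (lebesgueR (N `&` `]a, b]%classic) = 0%E); rewrite -mu_leb //.
  by apply/eqP; rewrite eq_le measure_ge0 andbT -muN0 le_measure ?inE.
- by apply/negligibleP => //; exact: lebesgue_measure_set1.
Qed.

Section joint_law_le.
Context d (T : measurableType d) (R : realType) (P : probability T R).
Variables (X U : {RV P >-> R}) (x : R).

Let mXx : measurable (X @^-1` `]-oo, x]%classic) :=
  measurable_funPTI X (measurable_itv _).

Definition joint_law_le : set R -> \bar R := pushforward (mrestr P mXx) U.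

Let joint_law_le0 : joint_law_le set0 = 0%E. Proof. exact: measure0. Qed.
Let joint_law_le_ge0 A : (0 <= joint_law_le A)%E.
Proof. exact: measure_ge0. Qed.
Let joint_law_le_semi_sigma_additive : semi_sigma_additive joint_law_le.
Proof. exact: measure_semi_sigma_additive. Qed.
HB.instance Definition _ := isMeasure.Build _ _ _ joint_law_le
  joint_law_le0 joint_law_le_ge0 joint_law_le_semi_sigma_additive.

Lemma joint_law_leE E :
  joint_law_le E = P (U @^-1` E `&` X @^-1` `]-oo, x]%classic).
Proof. by []. Qed.

End joint_law_le.

Section uniform.
Context d (T : measurableType d) (R : realType) (P : probability T R).
Variable U : {RV P >-> R}.
Hypothesis unifU : is_unif01 U.

Lemma unif01_itvNyc (t : R) : 0 <= t -> t <= 1 ->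
  distribution P U `]-oo, t]%classic = t%:E.
Proof. by move=> t0 t1; have := unifU t; rewrite /cdf max_l // min_l. Qed.

Lemma unif01_itvoc (s t : R) : 0 <= s -> s <= t -> t <= 1 ->
  distribution P U `]s, t]%classic = (t - s)%:E.
Proof.
move=> s0 st t1; apply: (measure_itvocB st); apply: unif01_itvNyc => //.
  exact: le_trans st.
exact: le_trans t1.
Qed.

Lemma unif01_setI_itvoc (a b : R) : 0 <= a -> b <= 1 ->
  forall E, measurable E ->
  distribution P U (E `&` `]a, b]%classic) = lebesgueR (E `&` `]a, b]%classic).
Proof.
move=> a0 b1; apply: measure_setI_itvoc_unique.
  by rewrite (le_lt_trans (probability_le1 _ _)) ?ltey.
move=> s t sa st tb /=.
rewrite (unif01_itvoc (le_trans a0 sa) (ltW st) (le_trans tb b1)).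
by rewrite /lebesgueR lebesgue_measure_itv /= lte_fin st EFinB.
Qed.

End uniform.

Section conditional_cdf.
Context d (T : measurableType d) (R : realType) (P : probability T R).

Lemma joint_law_le_T_independent (X U : {RV P >-> R}) (H : R -> R -> R)
    (a b x t : R) :
  is_cond_cdf U X H -> T_independent U X H a b -> t \in `[a, b] ->
  joint_law_le X U x `]-oo, t]%classic = (cdf U t * cdf X x)%E.
Proof.
move=> condH indepUX tab; rewrite joint_law_leE (condH t).2 //.
rewrite (@ae_eq_integral _ _ _ _ _ (cst (cdf U t))) ?integral_cst //.
- apply/measurable_realfun.measurable_EFinP.
  exact: measurable_funS (condH t).1.
- apply: (negligibleS _ (negligible_compl_support (distribution P X))).
  move=> z /= Hz; apply: contra_not Hz => Xz _.
  by rewrite (indepUX z t) // inE.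
Qed.

Lemma joint_law_le_factor (X U : {RV P >-> R}) (H : R -> R -> R) (a b x : R) :
  0 <= a -> b <= 1 -> is_unif01 U -> is_cond_cdf U X H ->
  T_independent U X H a b -> forall E, measurable E ->
  joint_law_le X U x (E `&` `]a, b]%classic) =
    (cdf X x * distribution P U (E `&` `]a, b]%classic))%E.
Proof.
move=> a0 b1 unifU condH indepUX.
have cE : cdf X x = (fine (cdf X x))%:E by rewrite fineK // fin_num_measure.
have c0 : 0 <= fine (cdf X x) by rewrite fine_ge0 // cdf_ge0.
have jointNy t : a <= t -> t <= b ->
    joint_law_le X U x `]-oo, t]%classic = (t * fine (cdf X x))%:E.
  move=> ta tb; have tab : t \in `[a, b] by rewrite in_itv /= ta tb.
  rewrite (joint_law_le_T_independent _ condH indepUX tab).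
  rewrite [cdf U t](unif01_itvNyc unifU (le_trans a0 ta) (le_trans tb b1)).
  by rewrite cE.
move=> E mE; rewrite cE.
pose cPU := mscale (NngNum c0) (distribution P U).
apply: (measure_setI_itvoc_unique (m2 := cPU)) mE.
  rewrite /= joint_law_leE (le_lt_trans (probability_le1 _ _)) ?ltey //.
  by apply: measurableI => //; exact: measurable_funPTI.
move=> s t sa st tb /=.
have ta := le_trans sa (ltW st); have sb := le_trans (ltW st) tb.
rewrite (measure_itvocB (ltW st) (jointNy t ta tb) (jointNy s sa sb)).
rewrite /cPU /mscale /=.
rewrite (unif01_itvoc unifU (le_trans a0 sa) (ltW st) (le_trans tb b1)).
by rewrite -EFinM mulrBr mulrC [X in _ - X]mulrC.
Qed.

Lemma cond_cdf_ae_eq (Y Z : {RV P >-> R}) (G : R -> R -> R) (y c : R)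
    (D : set R) :
  is_cond_cdf Y Z G -> measurable D ->
  (forall E, E `<=` D -> measurable E ->
    joint_law_le Y Z y E = (c%:E * distribution P Z E)%E) ->
  ae_eq (distribution P Z) D (fun z => (G y z)%:E) (cst c%:E).
Proof.
move=> condG mD jointE; apply/ae_eq_sym/integral_ae_eq => //.
- exact: finite_measure_integrable_cst.
- apply/measurable_realfun.measurable_EFinP.
  exact: measurable_funS (condG y).1.
- move=> E ED mE; rewrite integral_cst // -jointE // joint_law_leE setIC.
  exact: (condG y).2.
Qed.

End conditional_cdf.

Theorem corollary8 (d : measure_display) (T : measurableType d) (R : realType)
  (P : probability T R) (X U : {RV P >-> R}) (a b : R)
  (H G : R -> R -> R) :
  0 <= a -> a <= b -> b <= 1 ->
  is_unif01 U ->
  is_cond_cdf U X H ->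
  T_independent U X H a b ->
  is_cond_cdf X U G ->
  forall x : R,
    {ae (@lebesgue_measure R), forall u : R, u \in `[a, b] -> (G x u)%:E = cdf X x}.
Proof.
move=> a0 _ b1 unifU condH indepUX condG x.
have cE : cdf X x = (fine (cdf X x))%:E by rewrite fineK // fin_num_measure.
apply: (ae_lebesgue_itvcc (unif01_setI_itvoc unifU a0 b1)); rewrite cE.
apply: (cond_cdf_ae_eq condG) => // E Eab mE.
rewrite -(setIidl Eab) -cE.
exact: joint_law_le_factor.
Qed.
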